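(* Let $\sigma$ and $\tau$ be compositions of the same positive integer $m$. Then the map $\Psi_{\sigma,\tau}:\Gamma(\mathsf{hypo},\sigma)\to\Gamma(\mathsf{hypo},\tau)$, $T\mapsto\pi_\tau(\overline{T})$, is an isomorphism of unlabelled directed graphs.
   Context: Entries are positive integers. A quasi-array of size $m$ is an array $Q$ with cells $(i,j)$, $1\le i\le m$, $1\le j\le m-i+1$, each containing a positive integer, with first row weakly increasing and $Q_{(i,j)}=Q_{(1,i+j-1)}+i-1$. A quasi-ribbon tableau of shape $\sigma=(\sigma_1,\dots,\sigma_r)$ is a filling with positive integers of the diagram having $\sigma_i$ cells in row $i$, the leftmost cell of row $i+1$ directly below the rightmost cell of row $i$, weakly increasing along rows and strictly increasing down columns. Its column reading is the word read column by column left to right, each column bottom to top. Quasi-Kashiwara operator $f_i$ on a word $u$: undefined if $u$ contains a subsequence $(i+1)\,i$ or contains no $i$; otherwise replaces the rightmost $i$ by $i+1$. $\Gamma(\mathsf{hypo},\sigma)$ is the directed graph whose vertices are the quasi-ribbon tableaux of shape $\sigma$ (identified with their column readings), with an edge $u\to f_i(u)$ labelled $i$ whenever defined. For a quasi-array $Q$ of size $m$ and composition $\tau$ of $m$, $\pi_\tau(Q)$ is the quasi-ribbon tableau formed by the cells of $Q$ making up a quasi-ribbon diagram of shape $\tau$ whose first cell is $(1,1)$. For a quasi-ribbon tableau $T$ of shape $\sigma$ with $m$ cells, $\overline{T}$ is the unique quasi-array of size $m$ with $\pi_\sigma(\overline{T})=T$. *)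

(* All indices are 1-based as in the paper. *)
From mathcomp Require Import all_boot.
Set Implicit Arguments. Unset Strict Implicit. Unset Printing Implicit Defensive.

Definition composition (m : nat) (s : seq nat) : bool :=
  all (fun x => 0 < x) s && (sumn s == m).

(* Quasi-ribbon diagram of shape s, cells (i,j) with i = row, j = column,
   first cell (1,1); row i has nth 0 s i.-1 cells, and the leftmost cell of
   row i+1 is directly below the rightmost cell of row i. *)
Definition rstart (s : seq nat) (i : nat) : nat :=
  (sumn (map (fun x => x.-1) (take i.-1 s))).+1.

Definition in_ribbon (s : seq nat) (i j : nat) : bool :=
  (1 <= i <= size s) && (rstart s i <= j < rstart s i + nth 0 s i.-1).

(* A filling is a function on cells; only values on the diagram matter. *)
Definition filling := nat -> nat -> nat.

Definition is_qrt (s : seq nat) (T : filling) : Prop :=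
  (forall i j, in_ribbon s i j -> 0 < T i j) /\
  (forall i j, in_ribbon s i j -> in_ribbon s i j.+1 -> T i j <= T i j.+1) /\
  (forall i j, in_ribbon s i j -> in_ribbon s i.+1 j -> T i j < T i.+1 j).

(* Column reading: columns left to right, each column bottom to top.
   (sumn s bounds the number of columns; further columns are empty.) *)
Definition colread (s : seq nat) (T : filling) : seq nat :=
  flatten [seq [seq T i c | i <- rev (iota 1 (size s)) & in_ribbon s i c]
          | c <- iota 1 (sumn s)].

Fixpoint repl_first (a b : nat) (s : seq nat) : seq nat :=
  match s with
  | [::] => [::]
  | x :: s' => if x == a then b :: s' else x :: repl_first a b s'
  end.

Definition qf (i : nat) (u : seq nat) : option (seq nat) :=
  if (i \in u) && ~~ subseq [:: i.+1; i] u
  then Some (rev (repl_first i i.+1 (rev u)))  (* rightmost i replaced by i+1 *)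
  else None.

Definition gamma_vertex (s : seq nat) (w : seq nat) : Prop :=
  exists T, is_qrt s T /\ colread s T = w.

Definition gamma_edge (u v : seq nat) : Prop :=
  exists i, 0 < i /\ qf i u = Some v.

Definition is_qarray (m : nat) (Q : filling) : Prop :=
  (forall i j, 1 <= i -> 1 <= j -> i + j - 1 <= m ->
     0 < Q i j /\ Q i j = Q 1 (i + j - 1) + (i - 1)) /\
  (forall j, 1 <= j -> j < m -> Q 1 j <= Q 1 j.+1).

(* pi_tau(Q): the cells of Q forming a ribbon diagram of shape tau with first
   cell (1,1) (row i of the ribbon lies in row i of Q, with the same columns). *)
Definition proj (tau : seq nat) (Q : filling) : filling :=
  fun i j => if in_ribbon tau i j then Q i j else 0.

(* row of the k-th cell (in row-major ribbon order) of the shape s *)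
Definition rowof (s : seq nat) (k : nat) : nat :=
  count (fun r => sumn (take r s) < k) (iota 0 (size s)).

(* bar T: the quasi-array with pi_s(bar T) = T (explicit formula; the theorem
   additionally asserts that it is indeed a quasi-array projecting onto T). *)
Definition qbar (s : seq nat) (T : filling) : filling :=
  fun i j => let k := i + j - 1 in let r := rowof s k in
             T r (k - r + 1) - (r - 1) + (i - 1).

Definition Psi (sigma tau : seq nat) (T : filling) : filling :=
  proj tau (qbar sigma T).

From mathcomp Require Import all_boot zify.
Set Implicit Arguments. Unset Strict Implicit. Unset Printing Implicit Defensive.

(* Index the cells of a ribbon of shape s, a composition of m, by their
   anti-diagonal k = i + j - 1: row i occupies the block
   psum s (i-1) < k <= psum s i, so k runs once through 1..m and rowof s k is
   the row of cell k.  Subtracting i - 1 from the entries of row i of a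
   quasi-ribbon tableau T leaves a weakly increasing positive sequence
   q_T k = qbar s T 1 k, the first row of bar T, which determines T;
   conversely projecting a quasi-array onto a ribbon of any shape of size m
   gives a tableau with the same first row.  So Psi, which preserves q, is a
   bijection.
   In a column reading, f_i raises the entry i of largest anti-diagonal b, and
   it is defined exactly when b = m or q_T b < q_T (b+1): an i+1 read before an
   i can only be an i+1 directly below an i, which forces q_T to be constant
   on two consecutive diagonals.  Hence in every shape an edge adds 1 to one
   q_T b while keeping q_T weakly increasing, and Psi respects edges. *)

Definition psum (s : seq nat) (j : nat) : nat := sumn (take j s).

Lemma psum0 s : psum s 0 = 0.
Proof. by rewrite /psum take0. Qed.

Lemma psum_mono s : {homo psum s : j j' / j <= j'}.
Proof.
move=> j j' le_jj'; rewrite /psum -(take_takel s le_jj').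
by rewrite -{2}(cat_take_drop j (take j' s)) sumn_cat leq_addr.
Qed.

Lemma psum_oversize s j : size s <= j -> psum s j = sumn s.
Proof. by move=> le_sj; rewrite /psum take_oversize. Qed.

Lemma psum_le_sumn s j : psum s j <= sumn s.
Proof. by rewrite /psum -{2}(cat_take_drop j s) sumn_cat leq_addr. Qed.

Lemma psumS s j : j < size s -> psum s j.+1 = psum s j + nth 0 s j.
Proof. by move=> lt_js; rewrite /psum (take_nth 0 lt_js) sumn_rcons. Qed.

Lemma composition_pos m s : composition m s -> all (fun x => 0 < x) s.
Proof. by case/andP. Qed.

Lemma composition_sumn m s : composition m s -> sumn s = m.
Proof. by case/andP=> _ /eqP. Qed.

Lemma rowof_mono s : {homo rowof s : k k' / k <= k'}.
Proof. by move=> k k' le_kk'; apply: sub_count => r /= /leq_trans; apply. Qed.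

Section Ribbon.
Variables (m : nat) (s : seq nat).
Hypothesis s_comp : composition m s.

Lemma psum_ltS j : j < size s -> psum s j < psum s j.+1.
Proof.
move=> lt_js; rewrite psumS // -addn1 leq_add2l.
by apply: (allP (composition_pos s_comp)); rewrite mem_nth.
Qed.

Lemma psum_gap j j' : j <= j' <= size s -> psum s j + (j' - j) <= psum s j'.
Proof.
elim: j' => [|j' IHj'] /andP[le_jj' le_j's].
  by move: le_jj'; rewrite leqn0 => /eqP ->; rewrite addn0.
have [-> | ne_jj'] := eqVneq j j'.+1; first by rewrite subnn addn0.
have := IHj' ltac:(lia); have := @psum_ltS j' ltac:(lia); lia.
Qed.

Lemma in_ribbonE i j :
  in_ribbon s i j = (1 <= i <= size s) && (psum s i.-1 < i + j - 1 <= psum s i).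
Proof.
rewrite /in_ribbon; case: (boolP (1 <= i <= size s)) => //= hi.
have s_pos := composition_pos s_comp.
have pos_take : all (fun x => 0 < x) (take i.-1 s).
  by apply/allP => x /mem_take; apply: (allP s_pos).
have sumn_pred l : all (fun x => 0 < x) l -> sumn [seq x.-1 | x <- l] + size l = sumn l.
  by elim: l => //= x l IHl /andP[x_gt0 /IHl]; lia.
have := sumn_pred _ pos_take; rewrite size_takel; last by lia.
have := @psumS s i.-1 ltac:(lia); rewrite prednK; last by lia.
have := @psum_gap 0 i.-1 ltac:(lia); rewrite psum0 /psum /rstart.
by move=> *; apply/andP/andP; case; split; lia.
Qed.

Lemma rowof_psum i k : 1 <= i <= size s -> psum s i.-1 < k <= psum s i ->
  rowof s k = i.
Proof.
move=> hi hk; rewrite /rowof.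
transitivity (count (fun r => r < i) (iota 0 (size s))).
  apply: eq_in_count => r _; rewrite /= -/(psum s r).
  case: (ltnP r i) => [lt_ri | le_ir].
    by have := @psum_mono s r i.-1 ltac:(lia); lia.
  by have := psum_mono s le_ir; lia.
have le_is : i <= size s by lia.
rewrite -(subnKC le_is) iotaD count_cat add0n.
rewrite (@eq_in_count _ _ predT (iota 0 i)) => [|r]; last by rewrite mem_iota.
rewrite (@eq_in_count _ _ pred0 (iota i _)) => [|r]; last by rewrite mem_iota /=; lia.
by rewrite count_predT count_pred0 size_iota addn0.
Qed.

Lemma rowof_spec k : 0 < k <= m ->
  1 <= rowof s k <= size s /\ psum s (rowof s k).-1 < k <= psum s (rowof s k).
Proof.
move=> hk.
have ex_ge : exists r, k <= psum s r.
  by exists (size s); rewrite psum_oversize // (composition_sumn s_comp); lia.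
case: (ex_minnP ex_ge) => i le_ki min_i.
have i_gt0 : 0 < i by case: i le_ki {min_i} => //; rewrite psum0; lia.
have lt_km1 : psum s i.-1 < k.
  by case: ltnP => // /min_i; lia.
have le_is : i <= size s.
  case: leqP => // lt_si; have := min_i (size s).
  rewrite psum_oversize ?(composition_sumn s_comp); lia.
by rewrite (@rowof_psum i k) //; lia.
Qed.

Lemma rowof_le k : 0 < k <= m -> rowof s k <= k.
Proof.
move=> /rowof_spec[hi hk].
have := @psum_gap 0 (rowof s k).-1 ltac:(lia); rewrite psum0; lia.
Qed.

Lemma in_ribbon_rowof k : 0 < k <= m -> in_ribbon s (rowof s k) (k - rowof s k + 1).
Proof.
move=> hk; have [hi hpk] := rowof_spec hk; have := rowof_le hk.
rewrite in_ribbonE hi /= => le_rk.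
by rewrite (_ : rowof s k + _ - 1 = k) //; lia.
Qed.

Lemma in_ribbon_diag i j : in_ribbon s i j ->
  [/\ 1 <= i <= size s, 0 < j, 0 < i + j - 1 <= m & rowof s (i + j - 1) = i].
Proof.
rewrite in_ribbonE => /andP[hi hk].
have := @psum_gap 0 i.-1 ltac:(lia); rewrite psum0.
have := psum_le_sumn s i; rewrite (composition_sumn s_comp).
by split; rewrite ?(rowof_psum hi hk) //; lia.
Qed.

Lemma in_ribbon_diag_inj i j i' j' : in_ribbon s i j -> in_ribbon s i' j' ->
  i + j = i' + j' -> i = i' /\ j = j'.
Proof.
move=> rij ri'j' eq_k; have [_ _ _ row_k] := in_ribbon_diag rij.
have [_ _ _] := in_ribbon_diag ri'j'; rewrite -eq_k row_k; lia.
Qed.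

Lemma in_ribbon_col_lt i j i' j' : in_ribbon s i j -> in_ribbon s i' j' ->
  j < j' -> i + j - 1 < i' + j' - 1.
Proof.
move=> r1 r2 lt_jj'; case: ltnP => // le_k'k.
have := rowof_mono s le_k'k.
have [_ _ _ ->] := in_ribbon_diag r1; have [_ _ _ ->] := in_ribbon_diag r2.
move: r1 r2; rewrite !in_ribbonE => /andP[h1 h2] /andP[h3 h4] le_i'i.
have := @psum_gap i' i.-1 ltac:(lia); lia.
Qed.

Lemma in_ribbon_below i i' c : in_ribbon s i c -> in_ribbon s i' c -> i' < i ->
  in_ribbon s i'.+1 c.
Proof.
rewrite !in_ribbonE => /andP[h1 h2] /andP[h3 h4] lt_i'i /=.
by have := @psum_gap i' i.-1 ltac:(lia); have := @psum_ltS i' ltac:(lia); lia.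
Qed.

Lemma rowof_succ k : 0 < k < m ->
  rowof s k.+1 = rowof s k \/ rowof s k.+1 = (rowof s k).+1.
Proof.
move=> hk; have [hi hpk] := @rowof_spec k ltac:(lia).
set i := rowof s k in hi hpk *.
case: (leqP k.+1 (psum s i)) => [le_k1 | lt_k1].
  by left; apply: rowof_psum => //; lia.
have lt_is : i < size s.
  case: ltnP => // /psum_oversize; rewrite (composition_sumn s_comp); lia.
by right; apply: rowof_psum; have := psum_ltS lt_is; rewrite /=; lia.
Qed.

End Ribbon.

Lemma qbar_first_row s T k :
  qbar s T 1 k = T (rowof s k) (k - rowof s k + 1) - (rowof s k - 1).
Proof. by rewrite /qbar (_ : 1 + k - 1 = k) ?subnn ?addn0 //; lia. Qed.

Lemma qbar_diagE s T i j : qbar s T i j = qbar s T 1 (i + j - 1) + (i - 1).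
Proof. by rewrite qbar_first_row. Qed.

Section QuasiArray.
Variables (m : nat) (Q : filling).
Hypothesis Q_qarray : is_qarray m Q.

Lemma qarray_mono k k' : 0 < k -> k <= k' <= m -> Q 1 k <= Q 1 k'.
Proof.
case: Q_qarray => _ Q_mono k_gt0 /andP[]; elim: k' => [|k' IHk'] le_kk' le_k'm.
  by move: le_kk'; rewrite leqn0 => /eqP ->.
have [-> // | ne_kk'] := eqVneq k k'.+1.
by apply: leq_trans (IHk' _ _) (Q_mono _ _ _); lia.
Qed.

Lemma qarray_diagE i j : 0 < i -> 0 < j -> i + j - 1 <= m ->
  Q i j = Q 1 (i + j - 1) + (i - 1).
Proof. by case: Q_qarray => Q_diag _ *; case: (Q_diag i j). Qed.

Variable s : seq nat.
Hypothesis s_comp : composition m s.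

Lemma proj_diagE i j : in_ribbon s i j -> proj s Q i j = Q 1 (i + j - 1) + (i - 1).
Proof.
move=> rij; have [hi j_gt0 hk _] := in_ribbon_diag s_comp rij.
by rewrite /proj rij qarray_diagE //; lia.
Qed.

Lemma proj_qrt : is_qrt s (proj s Q).
Proof.
have Q_pos k : 0 < k <= m -> 0 < Q 1 k.
  by case: Q_qarray => Q_diag _ hk; case: (Q_diag 1 k) => //; lia.
split; [|split] => i j rij; have [hi j_gt0 hk _] := in_ribbon_diag s_comp rij.
- by rewrite proj_diagE //; have := Q_pos _ hk; lia.
- move=> rij1; have [_ _ hk1 _] := in_ribbon_diag s_comp rij1.
  by rewrite !proj_diagE // leq_add2r qarray_mono //; lia.
- move=> ri1j; have [_ _ hk1 _] := in_ribbon_diag s_comp ri1j.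
  rewrite !proj_diagE //.
  by have := @qarray_mono (i + j - 1) (i.+1 + j - 1) ltac:(lia) ltac:(lia); lia.
Qed.

Lemma qbar_proj k : 0 < k <= m -> qbar s (proj s Q) 1 k = Q 1 k.
Proof.
move=> hk; have le_rk := rowof_le s_comp hk.
rewrite qbar_first_row proj_diagE; last exact: (in_ribbon_rowof s_comp hk).
by rewrite (_ : rowof s k + _ - 1 = k); lia.
Qed.

End QuasiArray.

Section QuasiRibbonTableau.
Variables (m : nat) (s : seq nat) (T : filling).
Hypotheses (s_comp : composition m s) (T_qrt : is_qrt s T).

Lemma qrt_row_mono i j j' : in_ribbon s i j -> in_ribbon s i j' -> j <= j' ->
  T i j <= T i j'.
Proof.
case: T_qrt => _ [T_row _] rij; elim: j' => [|j' IHj'] rij' le_jj'.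
  by move: le_jj'; rewrite leqn0 => /eqP ->.
have [-> // | ne_jj'] := eqVneq j j'.+1.
have rij'0 : in_ribbon s i j'.
  move: rij rij'; rewrite !(in_ribbonE s_comp) => /andP[-> ?] /andP[_ ?] /=; lia.
by apply: leq_trans (IHj' rij'0 _) (T_row _ _ rij'0 rij'); lia.
Qed.

Lemma qrt_ge_row i j : in_ribbon s i j -> i <= T i j.
Proof.
elim: i j => [|[|i] IHi] j rij //; first by case: T_qrt => T_pos _; apply: T_pos.
move c_def : (psum s i.+1 - i.+1 + 1) => c.
move: (rij); rewrite (in_ribbonE s_comp) => /andP[hi /= hk].
have := @psum_ltS _ _ s_comp i ltac:(lia); have := @psum_ltS _ _ s_comp i.+1 ltac:(lia).
have := @psum_gap _ _ s_comp 0 i.+1 ltac:(lia); rewrite psum0.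
move=> ge_psum lt_psum1 lt_psum.
have ric : in_ribbon s i.+1 c by rewrite (in_ribbonE s_comp) /=; lia.
have ri1c : in_ribbon s i.+2 c by rewrite (in_ribbonE s_comp) /=; lia.
have := qrt_row_mono ri1c rij ltac:(lia).
case: T_qrt => _ [_ T_col]; have := T_col _ _ ric ri1c; have := IHi _ ric; lia.
Qed.

Lemma qrt_diagE i j : in_ribbon s i j -> T i j = qbar s T 1 (i + j - 1) + (i - 1).
Proof.
move=> rij; have [hi j_gt0 _ row_k] := in_ribbon_diag s_comp rij.
rewrite qbar_first_row row_k (_ : i + j - 1 - i + 1 = j); last by lia.
by have := qrt_ge_row rij; lia.
Qed.

Lemma qbar_on_ribbon i j : in_ribbon s i j -> qbar s T i j = T i j.
Proof. by move=> rij; rewrite qbar_diagE -qrt_diagE. Qed.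

Lemma qrt_rowofE k : 0 < k <= m ->
  T (rowof s k) (k - rowof s k + 1) = qbar s T 1 k + (rowof s k - 1).
Proof.
move=> hk; have le_rk := rowof_le s_comp hk.
rewrite qrt_diagE; last exact: (in_ribbon_rowof s_comp hk).
by rewrite (_ : rowof s k + _ - 1 = k); lia.
Qed.

Lemma qbar_qarray : is_qarray m (qbar s T).
Proof.
have cell k := @in_ribbon_rowof _ _ s_comp k.
split=> [i j i_gt0 j_gt0 hk | k k_gt0 lt_km].
  rewrite (qbar_diagE s T i j); split=> //.
  have hk' : 0 < i + j - 1 <= m by lia.
  have [r_gt0 _] := rowof_spec s_comp hk'.
  have := qrt_ge_row (cell _ hk'); rewrite qbar_first_row; lia.
have [hk hk1] : 0 < k <= m /\ 0 < k.+1 <= m by lia.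
have [T_row T_col] := T_qrt.2; have le_rk := rowof_le s_comp hk.
have := qrt_rowofE hk; have := qrt_rowofE hk1; have := cell _ hk; have := cell _ hk1.
case: (@rowof_succ _ _ s_comp k ltac:(lia)) => ->.
- rewrite (_ : k.+1 - rowof s k + 1 = (k - rowof s k + 1).+1); last by lia.
  by move=> r1 r0 e1 e0; have := T_row _ _ r0 r1; lia.
- rewrite (_ : k.+1 - (rowof s k).+1 + 1 = k - rowof s k + 1); last by lia.
  by move=> r1 r0 e1 e0; have := T_col _ _ r0 r1; lia.
Qed.

End QuasiRibbonTableau.

Section PairwiseWords.
Variables (A : eqType) (B : eqType) (r : rel A).
Hypotheses (r_trans : transitive r) (r_irr : irreflexive r).

Lemma subseq2_mapP (f : A -> B) (L : seq A) x y : pairwise r L ->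
  subseq [:: x; y] (map f L) <->
  exists p p', [/\ p \in L, p' \in L, r p p', f p = x & f p' = y].
Proof.
elim: L x y => [|a L IHL] x y /=; first by split=> // [[p [p' []]]].
case/andP=> r_aL pw_L; split.
  case: eqP => [fa_x | _].
    rewrite sub1seq => /mapP[p' p'L ->]; exists a, p'.
    by split; rewrite ?inE ?eqxx ?p'L ?orbT //; apply: (allP r_aL).
  move=> /(IHL _ _ pw_L)[p [p' [pL p'L rpp' <- <-]]].
  by exists p, p'; split; rewrite ?inE ?pL ?p'L ?orbT.
move=> [p [p' [+ + rpp' <- <-]]]; rewrite !inE.
case: (eqVneq p a) rpp' => [-> raa' _ | ne_pa rpp' /= pL].
  rewrite eqxx sub1seq; case: (eqVneq p' a) raa' => [-> | _ _ /= p'L].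
    by rewrite r_irr.
  exact: map_f.
case: (eqVneq p' a) rpp' => [-> rpa | _ rpp' /= p'L].
  by have := r_trans (allP r_aL _ pL) rpa; rewrite r_irr.
case: ifP => _; first by rewrite sub1seq map_f.
by apply/(IHL _ _ pw_L); exists p, p'.
Qed.

Lemma rev_repl_first_map (f : A -> nat) (L : seq A) p b : pairwise r L -> p \in L ->
  (forall p', p' \in L -> r p p' -> f p' != f p) ->
  rev (repl_first (f p) b (rev (map f L))) =
  map (fun z => if z == p then b else f z) L.
Proof.
elim/last_ind: L => [|L a IHL] //; rewrite pairwise_rcons => /andP[r_La pw_L].
rewrite mem_rcons inE map_rcons rev_rcons /= => pLa last_p.
case: (eqVneq a p) r_La => [-> | ne_ap] r_La.
  rewrite eqxx rev_cons map_rcons eqxx revK; congr rcons.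
  apply/eq_in_map => z zL; case: eqP => // ezp.
  by have := allP r_La _ zL; rewrite ezp r_irr.
have pL : p \in L by rewrite eq_sym (negPf ne_ap) in pLa.
have fa_fp : f a != f p by apply: last_p; rewrite ?mem_rcons ?inE ?eqxx // (allP r_La).
rewrite (negPf fa_fp) rev_cons IHL // ?map_rcons ?(negPf ne_ap) // => p' p'L.
by apply: last_p; rewrite mem_rcons inE p'L orbT.
Qed.

End PairwiseWords.

Definition cells (s : seq nat) : seq (nat * nat) :=
  flatten [seq [seq (i, c) | i <- rev (iota 1 (size s)) & in_ribbon s i c]
          | c <- iota 1 (sumn s)].

Definition read_before (p p' : nat * nat) : bool :=
  (p.2 < p'.2) || ((p.2 == p'.2) && (p'.1 < p.1)).

Lemma read_before_trans : transitive read_before.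
Proof.
by move=> [? ?] [? ?] [? ?]; rewrite /read_before /=; case: eqP; case: eqP; lia.
Qed.

Lemma read_before_irr : irreflexive read_before.
Proof. by move=> [? ?]; rewrite /read_before /=; lia. Qed.

Lemma colreadE s T : colread s T = [seq T p.1 p.2 | p <- cells s].
Proof.
rewrite /colread /cells map_flatten -map_comp; congr flatten.
by apply: eq_map => c /=; rewrite -map_comp.
Qed.

Lemma pairwise_read_before s : pairwise read_before (cells s).
Proof.
have : pairwise ltn (iota 1 (sumn s)).
  by rewrite -sorted_pairwise ?iota_ltn_sorted //; apply: ltn_trans.
rewrite /cells; elim: (iota 1 _) => //= c cs IHcs /andP[lt_c_cs pw_cs].
rewrite pairwise_cat IHcs // andbT; apply/andP; split.
  apply/allrelP => _ _ /mapP[i _ ->] /flattenP[_ /mapP[c' c'cs ->] /mapP[i' _ ->]].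
  by apply/orP; left; apply: (allP lt_c_cs).
rewrite pairwise_map; apply: pairwise_filter.
have : pairwise gtn (rev (iota 1 (size s))).
  rewrite -sorted_pairwise ?rev_sorted ?iota_ltn_sorted //.
  by move=> y x z /= lt_yx lt_zy; apply: ltn_trans lt_zy lt_yx.
by apply: sub_pairwise => i i'; rewrite /read_before /= eqxx ltnn.
Qed.

Lemma mem_cells m s p : composition m s -> (p \in cells s) = in_ribbon s p.1 p.2.
Proof.
move=> s_comp; apply/flattenP/idP => [[_ /mapP[c _ ->]] | ].
  by case/mapP=> i; rewrite mem_filter => /andP[? _] ->.
case: p => i j /= rij; have [hi j_gt0 hk _] := in_ribbon_diag s_comp rij.
exists [seq (i', j) | i' <- rev (iota 1 (size s)) & in_ribbon s i' j].
  by apply: map_f; rewrite mem_iota (composition_sumn s_comp); lia.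
by apply: map_f; rewrite mem_filter rij mem_rev mem_iota; lia.
Qed.

Lemma colread_eqP m s T1 T2 : composition m s ->
  colread s T1 = colread s T2 <-> forall i j, in_ribbon s i j -> T1 i j = T2 i j.
Proof.
move=> s_comp; rewrite !colreadE; split => [/eq_in_map eqT i j rij | eqT].
  by apply: (eqT (i, j)); rewrite (mem_cells _ s_comp).
by apply/eq_in_map => -[i j]; rewrite (mem_cells _ s_comp); apply: eqT.
Qed.

Lemma colread_qbar_eq m s F1 F2 : composition m s -> colread s F1 = colread s F2 ->
  forall k, 0 < k <= m -> qbar s F1 1 k = qbar s F2 1 k.
Proof.
move=> s_comp /(colread_eqP _ _ s_comp) eqF k hk.
by rewrite !qbar_first_row eqF // (in_ribbon_rowof s_comp hk).
Qed.

Lemma colread_qbarP m s T1 T2 : composition m s -> is_qrt s T1 -> is_qrt s T2 ->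
  colread s T1 = colread s T2 <->
  forall k, 0 < k <= m -> qbar s T1 1 k = qbar s T2 1 k.
Proof.
move=> s_comp T1_qrt T2_qrt.
split=> [eqT | eqq]; first exact: colread_qbar_eq s_comp eqT.
apply/(colread_eqP _ _ s_comp) => i j rij; have [_ _ hk _] := in_ribbon_diag s_comp rij.
by rewrite (qrt_diagE s_comp T1_qrt rij) (qrt_diagE s_comp T2_qrt rij) eqq.
Qed.

Definition qarray_edge (m : nat) (q q' : nat -> nat) : Prop :=
  exists2 b, 0 < b <= m &
    [/\ q' b = q b + 1, forall k, 0 < k <= m -> k != b -> q' k = q k
      & b < m -> q b < q b.+1].

Lemma eq_qarray_edge m q1 q2 q1' q2' :
  (forall k, 0 < k <= m -> q1 k = q1' k) -> (forall k, 0 < k <= m -> q2 k = q2' k) ->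
  qarray_edge m q1 q2 -> qarray_edge m q1' q2'.
Proof.
move=> eq1 eq2 [b hb [q2b q2k q1b]]; exists b => //; split=> [|k hk ne_kb|lt_bm].
- by rewrite -eq1 // -eq2.
- by rewrite -eq1 // -eq2 // q2k.
- by rewrite -!eq1 ?q1b //; lia.
Qed.

Definition max_diag_cell (s : seq nat) (T : filling) (x y : nat) : Prop :=
  forall x' y', in_ribbon s x' y' -> T x' y' = T x y -> x' + y' <= x + y.

Definition bump (T : filling) (x y : nat) : filling :=
  fun i j => if (i, j) == (x, y) then (T x y).+1 else T i j.

Section Edges.
Variables (m : nat) (s : seq nat).
Hypothesis s_comp : composition m s.

Lemma colread_last_cell T i : i \in colread s T ->
  exists x y, [/\ in_ribbon s x y, T x y = i & max_diag_cell s T x y].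
Proof.
rewrite colreadE => /mapP[p0 p0_cell Tp0].
pose diag_of_i k := has (fun p => (T p.1 p.2 == i) && (p.1 + p.2 == k)) (cells s).
have ex_k : exists k, diag_of_i k.
  by exists (p0.1 + p0.2); apply/hasP; exists p0; rewrite // Tp0 !eqxx.
have le_km k : diag_of_i k -> k <= m.+1.
  case/hasP=> -[x y]; rewrite (mem_cells _ s_comp) /=.
  by move=> /(in_ribbon_diag s_comp)[_ _ hk _] /andP[_ /eqP <-]; lia.
case: (ex_maxnP ex_k le_km) => k /hasP[[x y]]; rewrite (mem_cells _ s_comp) /=.
move=> rxy /andP[/eqP Txy /eqP k_xy] max_k; exists x, y; split=> // x' y' rxy'.
rewrite Txy => Tx'y'.
rewrite k_xy; apply: max_k; apply/hasP; exists (x', y').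
  by rewrite (mem_cells _ s_comp).
by rewrite /= Tx'y' !eqxx.
Qed.

Section OneTableau.
Variable T : filling.
Hypothesis T_qrt : is_qrt s T.

Let qbar_mono := qarray_mono (qbar_qarray s_comp T_qrt).

Lemma qrt_diag_mono x y x' y' : in_ribbon s x y -> in_ribbon s x' y' ->
  x + y - 1 <= x' + y' - 1 -> T x y <= T x' y'.
Proof.
move=> rxy rxy' le_kk'.
have [_ _ hk row_k] := in_ribbon_diag s_comp rxy.
have [_ _ hk' row_k'] := in_ribbon_diag s_comp rxy'.
have := rowof_mono s le_kk'; rewrite row_k row_k'.
rewrite (qrt_diagE s_comp T_qrt rxy) (qrt_diagE s_comp T_qrt rxy').
have := qbar_mono (_ : 0 < x + y - 1) (_ : _ <= x' + y' - 1 <= m).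
lia.
Qed.

Lemma qrt_col_lt x x' y : in_ribbon s x y -> in_ribbon s x' y -> x' < x ->
  T x' y < T x y.
Proof.
move=> rxy rx'y lt_x'x.
have [_ _ hk _] := in_ribbon_diag s_comp rxy.
have [hx' _ hk' _] := in_ribbon_diag s_comp rx'y.
rewrite (qrt_diagE s_comp T_qrt rxy) (qrt_diagE s_comp T_qrt rx'y).
have := qbar_mono (_ : 0 < x' + y - 1) (_ : _ <= x + y - 1 <= m).
lia.
Qed.

Lemma qrt_read_last x y : in_ribbon s x y ->
  max_diag_cell s T x y ->
  forall p, p \in cells s -> read_before (x, y) p -> T p.1 p.2 != T x y.
Proof.
move=> rxy last_xy [x' y']; rewrite (mem_cells _ s_comp) /read_before /= => rxy' before.
apply/eqP => eqT; have := last_xy _ _ rxy' eqT.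
case/orP: before => [lt_yy' | /andP[/eqP eq_y lt_x'x]].
  by have := in_ribbon_col_lt s_comp rxy rxy' lt_yy'; lia.
by rewrite -eq_y in rxy' eqT; have := qrt_col_lt rxy rxy' lt_x'x; lia.
Qed.

Lemma colread_descentP i : subseq [:: i.+1; i] (colread s T) <->
  exists x y, [/\ in_ribbon s x y, in_ribbon s x.+1 y, T x y = i & T x.+1 y = i.+1].
Proof.
have pw_cells := pairwise_read_before s.
rewrite colreadE (subseq2_mapP read_before_trans read_before_irr _ _ _ pw_cells).
split=> [[[xa ya] [[xc yc] []]] | [x [y [rxy rx1y Txy Tx1y]]]]; last first.
  exists (x.+1, y), (x, y); rewrite !(mem_cells _ s_comp) /read_before /=.
  by rewrite eqxx ltnSn orbT.
rewrite !(mem_cells _ s_comp) /read_before /= => ra rc + Ta Tc.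
case/orP => [lt_ac | /andP[/eqP eq_y lt_ca]].
  by have := qrt_diag_mono ra rc (ltnW (in_ribbon_col_lt s_comp ra rc lt_ac)); lia.
rewrite -eq_y in rc Tc; have rd := in_ribbon_below s_comp ra rc lt_ca.
exists xc, ya; split=> //; have := qrt_col_lt rd rc (ltnSn xc).
by have := qrt_diag_mono rd ra (_ : xc.+1 + ya - 1 <= xa + ya - 1); lia.
Qed.

Lemma qrt_raisable_qbar_lt x y : in_ribbon s x y ->
  max_diag_cell s T x y ->
  ~~ subseq [:: (T x y).+1; T x y] (colread s T) ->
  x + y - 1 < m -> qbar s T 1 (x + y - 1) < qbar s T 1 (x + y).
Proof.
move=> rxy last_xy no_descent lt_bm.
have [hx hy hb row_b] := in_ribbon_diag s_comp rxy.
have hb1 : 0 < x + y <= m by lia.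
have := rowof_le s_comp hb1; have := in_ribbon_rowof s_comp hb1.
have := qrt_rowofE s_comp T_qrt hb1; have Txy := qrt_diagE s_comp T_qrt rxy.
have := @rowof_succ _ _ s_comp (x + y - 1) ltac:(lia).
rewrite row_b (_ : (x + y - 1).+1 = x + y); last by lia.
case=> -> Td rd le_rk.
- have := qrt_diag_mono rxy rd (_ : x + y - 1 <= _); have := last_xy _ _ rd; lia.
- rewrite (_ : x + y - x.+1 + 1 = y) in rd Td; last by lia.
  have : T x.+1 y != (T x y).+1.
    apply: contra no_descent => /eqP Tx1y; apply/colread_descentP.
    by exists x, y.
  by have := qrt_col_lt rd rxy (ltnSn x); lia.
Qed.

Lemma qbar_lt_qrt_raisable x y : in_ribbon s x y ->
  (x + y - 1 < m -> qbar s T 1 (x + y - 1) < qbar s T 1 (x + y)) ->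
  max_diag_cell s T x y /\
  ~~ subseq [:: (T x y).+1; T x y] (colread s T).
Proof.
move=> rxy lt_q; have [hx hy hb row_b] := in_ribbon_diag s_comp rxy.
have Txy := qrt_diagE s_comp T_qrt rxy.
have last_xy : max_diag_cell s T x y.
  move=> x' y' rxy' eqT; case: leqP => // lt_k.
  have [_ _ hk' row_k'] := in_ribbon_diag s_comp rxy'.
  have := rowof_mono s (_ : x + y - 1 <= x' + y' - 1); rewrite row_b row_k'.
  have := qbar_mono (_ : 0 < x + y) (_ : _ <= x' + y' - 1 <= m).
  by have := qrt_diagE s_comp T_qrt rxy'; have := lt_q ltac:(lia); lia.
split=> //; apply/negP => /colread_descentP[x1 [y1 [r1 r1' T1 T1']]].
have [hx1 _ _ _] := in_ribbon_diag s_comp r1.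
have [_ _ hk1' _] := in_ribbon_diag s_comp r1'.
case: (ltngtP (x1 + y1) (x + y)) (last_xy _ _ r1 T1) => // [lt_k | eq_k] _.
  by have := qrt_diag_mono r1' rxy (_ : x1.+1 + y1 - 1 <= x + y - 1); lia.
have := qrt_diagE s_comp T_qrt r1; have := qrt_diagE s_comp T_qrt r1'.
have -> : x1.+1 + y1 - 1 = x + y by lia.
have -> : x1 + y1 - 1 = x + y - 1 by lia.
by have := lt_q ltac:(lia); lia.
Qed.

Lemma qf_colread_bump x y : in_ribbon s x y ->
  max_diag_cell s T x y ->
  ~~ subseq [:: (T x y).+1; T x y] (colread s T) ->
  qf (T x y) (colread s T) = Some (colread s (bump T x y)).
Proof.
move=> rxy last_xy no_descent.
have xy_cell : (x, y) \in cells s by rewrite (mem_cells _ s_comp).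
have Txy_in : T x y \in colread s T.
  by rewrite colreadE; apply: (map_f (fun p => T p.1 p.2) xy_cell).
rewrite /qf Txy_in no_descent; congr Some.
have pw_cells := pairwise_read_before s.
rewrite !colreadE (rev_repl_first_map read_before_irr _ pw_cells xy_cell).
  by apply/eq_in_map => -[i j].
exact: qrt_read_last.
Qed.

Lemma qbar_bump x y k : in_ribbon s x y -> 0 < k <= m ->
  qbar s (bump T x y) 1 k = if k == x + y - 1 then (qbar s T 1 k).+1 else qbar s T 1 k.
Proof.
move=> rxy hk; have [_ hy _ row_b] := in_ribbon_diag s_comp rxy.
have ge_row := qrt_ge_row s_comp T_qrt rxy; have le_rk := rowof_le s_comp hk.
rewrite !qbar_first_row /bump xpair_eqE.
have [-> | ne_kb] := eqVneq k (x + y - 1).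
  by rewrite row_b (_ : x + y - 1 - x + 1 = y) ?eqxx //=; lia.
case: (rowof s k =P x) => //= row_k; case: (_ =P y) => //= col_k.
by case/eqP: ne_kb; lia.
Qed.

End OneTableau.

Lemma gamma_edge_qarray_edge T1 T2 : is_qrt s T1 -> is_qrt s T2 ->
  gamma_edge (colread s T1) (colread s T2) -> qarray_edge m (qbar s T1 1) (qbar s T2 1).
Proof.
move=> T1_qrt T2_qrt [i [_ qf_w1]].
have /andP[i_in no_descent] :
    (i \in colread s T1) && ~~ subseq [:: i.+1; i] (colread s T1).
  by move: qf_w1; rewrite /qf; case: ifP.
have [x [y [rxy Txy last_xy]]] := colread_last_cell i_in; subst i.
move: qf_w1; rewrite qf_colread_bump // => -[/(colread_qbar_eq s_comp) eq_q2].
have [_ _ hb _] := in_ribbon_diag s_comp rxy.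
exists (x + y - 1) => //; split=> [|k hk ne_kb|].
- by rewrite -eq_q2 // qbar_bump // eqxx addn1.
- by rewrite -eq_q2 // qbar_bump // (negPf ne_kb).
- move=> lt_bm; rewrite (_ : (x + y - 1).+1 = x + y); last by lia.
  exact: qrt_raisable_qbar_lt.
Qed.

Lemma qarray_edge_gamma_edge T1 T2 : is_qrt s T1 -> is_qrt s T2 ->
  qarray_edge m (qbar s T1 1) (qbar s T2 1) -> gamma_edge (colread s T1) (colread s T2).
Proof.
move=> T1_qrt T2_qrt [b hb [q2b q2k q1b]].
have [x [y [rxy def_b]]] : exists x y, in_ribbon s x y /\ b = x + y - 1.
  exists (rowof s b), (b - rowof s b + 1); have le_rb := rowof_le s_comp hb.
  by split; [exact: (in_ribbon_rowof s_comp hb) | lia].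
subst b; have [_ _ hb' _] := in_ribbon_diag s_comp rxy.
have lt_q : x + y - 1 < m -> qbar s T1 1 (x + y - 1) < qbar s T1 1 (x + y).
  by move=> /q1b; rewrite (_ : (x + y - 1).+1 = x + y) //; lia.
have [last_xy no_descent] := qbar_lt_qrt_raisable T1_qrt rxy lt_q.
exists (T1 x y); split; first by case: T1_qrt => T_pos _; apply: T_pos.
rewrite qf_colread_bump //; congr Some; apply/(colread_eqP _ _ s_comp) => i j rij.
have [_ _ hk _] := in_ribbon_diag s_comp rij.
rewrite (qrt_diagE s_comp T2_qrt rij) /bump; case: eqP => [[-> ->] | ne_ij].
  by rewrite (qrt_diagE s_comp T1_qrt rxy) q2b; lia.
rewrite (qrt_diagE s_comp T1_qrt rij) q2k //; apply/eqP => eq_k.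
by case: ne_ij; have [-> ->] := in_ribbon_diag_inj s_comp rij rxy ltac:(lia).
Qed.

Lemma gamma_edgeE T1 T2 : is_qrt s T1 -> is_qrt s T2 ->
  gamma_edge (colread s T1) (colread s T2) <->
  qarray_edge m (qbar s T1 1) (qbar s T2 1).
Proof.
move=> T1_qrt T2_qrt.
by split; [exact: gamma_edge_qarray_edge | exact: qarray_edge_gamma_edge].
Qed.

End Edges.

Section Psi.
Variables (m : nat) (sigma tau : seq nat).
Hypotheses (sigma_comp : composition m sigma) (tau_comp : composition m tau).

Lemma Psi_qrt T : is_qrt sigma T -> is_qrt tau (Psi sigma tau T).
Proof. by move=> T_qrt; exact: (proj_qrt (qbar_qarray sigma_comp T_qrt) tau_comp). Qed.

Lemma qbar_Psi T k : is_qrt sigma T -> 0 < k <= m ->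
  qbar tau (Psi sigma tau T) 1 k = qbar sigma T 1 k.
Proof. by move=> T_qrt; exact: (qbar_proj (qbar_qarray sigma_comp T_qrt) tau_comp). Qed.

Lemma colread_Psi T1 T2 : is_qrt sigma T1 -> is_qrt sigma T2 ->
  colread tau (Psi sigma tau T1) = colread tau (Psi sigma tau T2) <->
  colread sigma T1 = colread sigma T2.
Proof.
move=> T1_qrt T2_qrt.
rewrite (colread_qbarP tau_comp (Psi_qrt T1_qrt) (Psi_qrt T2_qrt)).
rewrite (colread_qbarP sigma_comp T1_qrt T2_qrt).
by split=> eq_q k hk; move: (eq_q k hk); rewrite !qbar_Psi.
Qed.

Lemma gamma_edge_Psi T1 T2 : is_qrt sigma T1 -> is_qrt sigma T2 ->
  gamma_edge (colread sigma T1) (colread sigma T2) <->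
  gamma_edge (colread tau (Psi sigma tau T1)) (colread tau (Psi sigma tau T2)).
Proof.
move=> T1_qrt T2_qrt; rewrite (gamma_edgeE sigma_comp T1_qrt T2_qrt).
rewrite (gamma_edgeE tau_comp (Psi_qrt T1_qrt) (Psi_qrt T2_qrt)).
by split; apply: eq_qarray_edge => k hk; rewrite ?qbar_Psi.
Qed.

End Psi.

Theorem corollary4p2 (m : nat) (sigma tau : seq nat) :
  0 < m -> composition m sigma -> composition m tau ->
  (* bar T is the quasi-array of size m with pi_sigma(bar T) = T *)
  (forall T, is_qrt sigma T ->
     is_qarray m (qbar sigma T) /\
     (forall i j, in_ribbon sigma i j -> qbar sigma T i j = T i j)) /\
  (* Psi maps vertices of Gamma(hypo,sigma) to vertices of Gamma(hypo,tau) *)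
  (forall T, is_qrt sigma T -> is_qrt tau (Psi sigma tau T)) /\
  (forall T1 T2, is_qrt sigma T1 -> is_qrt sigma T2 ->
     colread sigma T1 = colread sigma T2 ->
     colread tau (Psi sigma tau T1) = colread tau (Psi sigma tau T2)) /\
  (* injective *)
  (forall T1 T2, is_qrt sigma T1 -> is_qrt sigma T2 ->
     colread tau (Psi sigma tau T1) = colread tau (Psi sigma tau T2) ->
     colread sigma T1 = colread sigma T2) /\
  (* surjective *)
  (forall T', is_qrt tau T' ->
     exists T, is_qrt sigma T /\ colread tau (Psi sigma tau T) = colread tau T') /\
  (* preserves and reflects (unlabelled) edges *)
  (forall T1 T2, is_qrt sigma T1 -> is_qrt sigma T2 ->
     (gamma_edge (colread sigma T1) (colread sigma T2) <->
      gamma_edge (colread tau (Psi sigma tau T1)) (colread tau (Psi sigma tau T2)))).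
Proof.
move=> _ sigma_comp tau_comp.
have colread_PsiP := colread_Psi sigma_comp tau_comp.
split.
  move=> T T_qrt.
  by split; [exact: qbar_qarray sigma_comp T_qrt | exact: qbar_on_ribbon sigma_comp T_qrt].
split; first exact: Psi_qrt sigma_comp tau_comp.
split; first by move=> T1 T2 T1_qrt T2_qrt /(colread_PsiP _ _ T1_qrt T2_qrt).
split; first by move=> T1 T2 T1_qrt T2_qrt /(colread_PsiP _ _ T1_qrt T2_qrt).
split; last exact: gamma_edge_Psi sigma_comp tau_comp.
move=> T' T'_qrt; have T_qrt := Psi_qrt tau_comp sigma_comp T'_qrt.
exists (Psi tau sigma T'); split=> //.
apply/(colread_qbarP tau_comp (Psi_qrt sigma_comp tau_comp T_qrt) T'_qrt) => k hk.
by rewrite (qbar_Psi sigma_comp tau_comp) ?(qbar_Psi tau_comp sigma_comp).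
Qed.
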